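(* For $A\in\mathbb{R}^{m\times N}$ and $K\subseteq[N]$ the following are equivalent: (i) every $x_0\in\{0,1\}^N$ with $\operatorname{supp}x_0\subseteq K$ is the unique solution of $(P_{\mathrm{bin}})$ with $b=Ax_0$; (ii) every $x_0\in[0,1]^N$ with $\operatorname{supp}x_0\subseteq K$ is the unique solution of $(P_{\mathrm{bin}})$ with $b=Ax_0$; (iii) $\ker(A)\cap N^+\cap H_K^+=\{0\}$, where $H^+_K=\{w\in\mathbb{R}^N: w_i\ge 0 \text{ for } i\in [N]\setminus K\}$ and $N^+=\{w\in\mathbb{R}^N: \sum_{i=1}^N w_i\le 0\}$.
   Context: $[N]=\{1,\dots,N\}$. $(P_{\mathrm{bin}})$ is the program $\min\|x\|_1$ subject to $Ax=b$ and $x\in[0,1]^N$; ''unique solution'' means unique minimizer. *)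

From mathcomp Require Import all_boot all_order all_algebra.
From mathcomp Require Import reals.
Set Implicit Arguments. Unset Strict Implicit. Unset Printing Implicit Defensive.
Import Order.TTheory GRing.Theory Num.Theory.
Local Open Scope ring_scope.

Section Defs.
Variables (R : realType) (m N : nat).

Definition l1norm (x : 'cV[R]_N) : R := \sum_(i < N) `|x i 0|.

Definition in_unit_box (x : 'cV[R]_N) : Prop := forall i, 0 <= x i 0 <= 1.

Definition is_binary (x : 'cV[R]_N) : Prop := forall i, x i 0 = 0 \/ x i 0 = 1.

Definition supp_sub (x : 'cV[R]_N) (K : {set 'I_N}) : Prop :=
  forall i, x i 0 != 0 -> i \in K.

Definition Pbin_feasible (A : 'M[R]_(m, N)) (b : 'cV[R]_m) (x : 'cV[R]_N) : Prop :=
  A *m x = b /\ in_unit_box x.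

Definition Pbin_minimizer (A : 'M[R]_(m, N)) (b : 'cV[R]_m) (x : 'cV[R]_N) : Prop :=
  Pbin_feasible A b x /\ forall y, Pbin_feasible A b y -> l1norm x <= l1norm y.

Definition Pbin_unique_solution (A : 'M[R]_(m, N)) (b : 'cV[R]_m) (x : 'cV[R]_N) : Prop :=
  Pbin_minimizer A b x /\ forall y, Pbin_minimizer A b y -> y = x.

Definition HKplus (K : {set 'I_N}) (w : 'cV[R]_N) : Prop :=
  forall i, i \notin K -> 0 <= w i 0.

Definition Nplus (w : 'cV[R]_N) : Prop := \sum_(i < N) w i 0 <= 0.

End Defs.

From mathcomp Require Import all_boot all_order all_algebra.
From mathcomp Require Import reals.
From mathcomp Require Import lra.
Set Implicit Arguments. Unset Strict Implicit. Unset Printing Implicit Defensive.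
Import Order.TTheory GRing.Theory Num.Theory.
Local Open Scope ring_scope.

(* On [0,1]^N the l1-norm is the linear functional x |-> sum_i x_i, so for
   x0 in the box every feasible y differs from x0 by w = y - x0 in ker A,
   which lies in H_K^+ when supp x0 ⊆ K, and y does not beat x0 iff
   sum_i w_i <= 0.  Hence (iii) gives (ii), and (ii) trivially gives (i).
   Conversely, given w in ker A ∩ N^+ ∩ H_K^+, the binary vector x0 with
   ones exactly where i ∈ K and w_i < 0 has supp x0 ⊆ K, and x0 + t w is a
   feasible point of no larger norm for small t > 0; uniqueness in (i)
   then forces w = 0. *)

Section BinaryRecovery.
Variables (R : realType) (m N : nat) (A : 'M[R]_(m, N)).

Definition binary_recovery (K : {set 'I_N}) : Prop :=
  forall x0 : 'cV[R]_N, is_binary x0 -> supp_sub x0 K ->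
    Pbin_unique_solution A (A *m x0) x0.

Definition unit_box_recovery (K : {set 'I_N}) : Prop :=
  forall x0 : 'cV[R]_N, in_unit_box x0 -> supp_sub x0 K ->
    Pbin_unique_solution A (A *m x0) x0.

Definition null_space_property (K : {set 'I_N}) : Prop :=
  forall w : 'cV[R]_N, A *m w = 0 -> Nplus w -> HKplus K w -> w = 0.

Lemma binary_in_unit_box (x : 'cV[R]_N) : is_binary x -> in_unit_box x.
Proof. by move=> xb i; case: (xb i) => ->; rewrite ?lexx ?ler01. Qed.

Lemma l1norm_unit_box (x : 'cV[R]_N) :
  in_unit_box x -> l1norm x = \sum_(i < N) x i 0.
Proof.
move=> xbox; apply: eq_bigr => i _.
by rewrite ger0_norm //; case/andP: (xbox i).
Qed.

Lemma supp_sub_eq0 (x : 'cV[R]_N) (K : {set 'I_N}) i :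
  supp_sub x K -> i \notin K -> x i 0 = 0.
Proof. by move=> xK iK; apply/eqP/negPn/negP => /xK; apply/negP. Qed.

Lemma unit_box_sub_HKplus (x0 y : 'cV[R]_N) (K : {set 'I_N}) :
  supp_sub x0 K -> in_unit_box y -> HKplus K (y - x0).
Proof.
move=> x0K ybox i iK; rewrite !mxE (supp_sub_eq0 x0K iK) subr0.
by case/andP: (ybox i).
Qed.

Lemma sum_col_sub (x y : 'cV[R]_N) :
  \sum_(i < N) (y - x) i 0 = \sum_(i < N) y i 0 - \sum_(i < N) x i 0.
Proof. by rewrite -sumrB; apply: eq_bigr => i _; rewrite !mxE. Qed.

Lemma Pbin_unique_solution_strict (b : 'cV[R]_m) (x0 : 'cV[R]_N) :
  Pbin_feasible A b x0 ->
  (forall y, Pbin_feasible A b y -> y != x0 -> l1norm x0 < l1norm y) ->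
  Pbin_unique_solution A b x0.
Proof.
move=> fx0 strict; split.
  split=> // y fy; have [->|yx0] := eqVneq y x0; first exact: lexx.
  exact/ltW/strict.
move=> y [fy ymin]; apply/eqP/negPn/negP => yx0.
by have := ymin x0 fx0; rewrite leNgt strict.
Qed.

Lemma Pbin_unique_solution_le (b : 'cV[R]_m) (x0 y : 'cV[R]_N) :
  Pbin_unique_solution A b x0 -> Pbin_feasible A b y ->
  l1norm y <= l1norm x0 -> y = x0.
Proof.
move=> [[_ x0min] x0uniq] fy le_yx0; apply: x0uniq; split=> // z fz.
exact: le_trans le_yx0 (x0min z fz).
Qed.

Lemma null_space_property_unit_box_recovery (K : {set 'I_N}) :
  null_space_property K -> unit_box_recovery K.
Proof.
move=> nsp x0 x0box x0K; apply: Pbin_unique_solution_strict => // y [Ay ybox] yx0.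
rewrite !l1norm_unit_box // -subr_gt0 -sum_col_sub ltNge; apply/negP => Nw.
move/negP: yx0; apply; rewrite -subr_eq0; apply/eqP/nsp => //.
  by rewrite mulmxBr Ay subrr.
exact: unit_box_sub_HKplus.
Qed.

Lemma unit_box_recovery_binary_recovery (K : {set 'I_N}) :
  unit_box_recovery K -> binary_recovery K.
Proof. by move=> rec x0 /binary_in_unit_box; apply: rec. Qed.

Lemma exists_entrywise_contraction (w : 'cV[R]_N) :
  exists2 t : R, 0 < t & forall i, t * `|w i 0| <= 1.
Proof.
have sum_ge0 : 0 <= \sum_(i < N) `|w i 0| by apply: sumr_ge0.
exists (1 + \sum_(i < N) `|w i 0|)^-1; first by rewrite invr_gt0; lra.
move=> i; rewrite mulrC ler_pdivrMr; last lra.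
rewrite mul1r (bigD1 i) //=.
have : 0 <= \sum_(j < N | j != i) `|w j 0| by apply: sumr_ge0.
lra.
Qed.

Definition neg_indicator (K : {set 'I_N}) (w : 'cV[R]_N) : 'cV[R]_N :=
  \col_i (if (i \in K) && (w i 0 < 0) then 1 else 0).

Lemma neg_indicator_binary K w : is_binary (neg_indicator K w).
Proof. by move=> i; rewrite mxE; case: ifP; [right | left]. Qed.

Lemma neg_indicator_supp K w : supp_sub (neg_indicator K w) K.
Proof. by move=> i; rewrite mxE; case: ifP => [/andP[]|]; rewrite ?eqxx. Qed.

Lemma neg_indicator_shift_unit_box K (w : 'cV[R]_N) t :
  HKplus K w -> 0 < t -> (forall i, t * `|w i 0| <= 1) ->
  in_unit_box (neg_indicator K w + t *: w).
Proof.
move=> wK t0 tw i; rewrite !mxE; have := tw i.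
case: ifP => [/andP[_ wi_lt0] | not_neg].
  rewrite ltr0_norm // mulrN => tw_le1.
  have : t * w i 0 < 0 by rewrite pmulr_rlt0.
  by move=> ?; apply/andP; split; lra.
have wi_ge0 : 0 <= w i 0.
  case: (boolP (i \in K)) => iK; last exact: wK.
  by move: not_neg; rewrite iK /= => /negbT; rewrite -leNgt.
rewrite ger0_norm // => tw_le1.
have : 0 <= t * w i 0 by rewrite pmulr_rge0.
by move=> ?; apply/andP; split; lra.
Qed.

Lemma binary_recovery_null_space_property (K : {set 'I_N}) :
  binary_recovery K -> null_space_property K.
Proof.
move=> rec w Aw Nw wK; have [t t0 tw] := exists_entrywise_contraction w.
set x0 := neg_indicator K w.
have x0uniq := rec x0 (@neg_indicator_binary K w) (@neg_indicator_supp K w).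
have ybox := neg_indicator_shift_unit_box wK t0 tw.
have x0box : in_unit_box x0 := binary_in_unit_box (@neg_indicator_binary K w).
have fy : Pbin_feasible A (A *m x0) (x0 + t *: w).
  by split=> //; rewrite mulmxDr -scalemxAr Aw scaler0 addr0.
have le_yx0 : l1norm (x0 + t *: w) <= l1norm x0.
  rewrite !l1norm_unit_box // -subr_le0 -sum_col_sub addrAC subrr add0r.
  under eq_bigr do rewrite mxE.
  by rewrite -mulr_sumr pmulr_rle0.
have /eqP := Pbin_unique_solution_le x0uniq fy le_yx0.
rewrite -subr_eq0 addrAC subrr add0r scaler_eq0 => /orP[|/eqP //].
by rewrite gt_eqF.
Qed.

End BinaryRecovery.

Theorem theorem2p6 (R : realType) (m N : nat) (A : 'M[R]_(m, N)) (K : {set 'I_N}) :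
  [/\ ((forall x0 : 'cV[R]_N, is_binary x0 -> supp_sub x0 K ->
          Pbin_unique_solution A (A *m x0) x0) <->
       (forall x0 : 'cV[R]_N, in_unit_box x0 -> supp_sub x0 K ->
          Pbin_unique_solution A (A *m x0) x0)),
      ((forall x0 : 'cV[R]_N, in_unit_box x0 -> supp_sub x0 K ->
          Pbin_unique_solution A (A *m x0) x0) <->
       (forall w : 'cV[R]_N, A *m w = 0 -> Nplus w -> HKplus K w -> w = 0))
    & ((forall x0 : 'cV[R]_N, is_binary x0 -> supp_sub x0 K ->
          Pbin_unique_solution A (A *m x0) x0) <->
       (forall w : 'cV[R]_N, A *m w = 0 -> Nplus w -> HKplus K w -> w = 0))].
Proof.
have i_iii := @binary_recovery_null_space_property R m N A K.
have iii_ii := @null_space_property_unit_box_recovery R m N A K.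
have ii_i := @unit_box_recovery_binary_recovery R m N A K.
split; split.
- by move/i_iii/iii_ii.
- exact: ii_i.
- by move/ii_i/i_iii.
- exact: iii_ii.
- exact: i_iii.
- by move/iii_ii/ii_i.
Qed.
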